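(* For every $n \geq 3$, letting $C_n$ denote the cycle of length $n$, ${\rm ML}^{\rm W}(C_n)=3$ if $n=3$, and ${\rm ML}^{\rm W}(C_n)=2n-6$ if $n\geq 4$.
   Context: A walk of a graph $G$ is a sequence of vertices $u_0u_1\dots u_p$ with $u_tu_{t+1}\in E(G)$ for all $t$ (vertices and edges may repeat); its length is $p$. For a walk $W$ of $G$, $G+W$ is the multigraph on $V(G)$ whose edge multiset consists of $E(G)$ together with each edge added as many times as $W$ traverses it. A multigraph is locally irregular if no two adjacent vertices have the same degree; a walk is irregularising if $G+W$ is locally irregular. ${\rm ML}^{\rm W}(G)$ denotes the minimum length of an irregularising walk of $G$ (a walk of length $0$ is allowed). *)

From mathcomp Require Import all_boot.
Set Implicit Arguments. Unset Strict Implicit. Unset Printing Implicit Defensive.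

(* A simple graph: vertex set a finType T, adjacency e : rel T
   (symmetric, irreflexive). *)

(* A walk u_0 u_1 ... u_p is represented by its start vertex u_0 and the
   sequence [:: u_1; ...; u_p]; it is a walk of G iff [path e u0 s]. *)
Definition is_walk (T : finType) (e : rel T) (u0 : T) (s : seq T) : bool :=
  path e u0 s.

Definition walk_length (T : finType) (u0 : T) (s : seq T) : nat := size s.

Definition walk_steps (T : finType) (u0 : T) (s : seq T) : seq (T * T) :=
  zip (u0 :: s) s.

Definition deg (T : finType) (e : rel T) (v : T) : nat := #|[pred u | e v u]|.

(* degree of v in the multigraph G + W: each traversal of an edge incident
   to v adds one to its degree (G has no loops, so u_t <> u_{t+1}). *)
Definition deg_plus (T : finType) (e : rel T) (u0 : T) (s : seq T) (v : T)
  : nat :=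
  deg e v + count (fun p : T * T => (p.1 == v) || (p.2 == v)) (walk_steps u0 s).

(* G + W locally irregular: adjacent vertices (adjacency in G + W equals
   adjacency in G) have different degrees. *)
Definition irregularising (T : finType) (e : rel T) (u0 : T) (s : seq T)
  : Prop :=
  is_walk e u0 s /\
  forall u v : T, e u v -> deg_plus e u0 s u <> deg_plus e u0 s v.

Definition MLW_is (T : finType) (e : rel T) (L : nat) : Prop :=
  (exists (u0 : T) (s : seq T), irregularising e u0 s /\ walk_length u0 s = L)
  /\ (forall (u0 : T) (s : seq T), irregularising e u0 s -> L <= walk_length u0 s).

Definition cycle_rel (n : nat) : rel 'I_n :=
  fun i j => (nat_of_ord j == i.+1 %% n) || (nat_of_ord i == j.+1 %% n).
Arguments cycle_rel n : clear implicits.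

(* On the cycle, let m_j count the crossings of the edge {j, j+1} by the walk W.
   The degree of j+1 in G + W is 2 + m_j + m_{j+1}, so W is irregularising iff
   m_j <> m_{j+2} for every j. For n = 3 the m_j are then pairwise distinct and
   sum to at least 0 + 1 + 2. In general m_j + m_{j+2} >= 4 unless one of them
   vanishes or they have different parities. The crossed edges form an arc, so
   with m_j <> m_{j+2} at most two m_j vanish; and m_j + m_{j+2} has the parity of
   the W-degrees of j+1 and j+2 together, which are odd only at the two ends of W,
   so m_j and m_{j+2} differ in parity for at most four j. Summing gives
   2 |W| >= 4n - 12. Conversely, walks of length 2n - 6 are built on the integers
   from a short prefix followed by periodic blocks (and a final back-and-forth
   when n = 3 mod 4), then read modulo n. *)

From mathcomp Require Import all_boot.
From mathcomp Require Import zify.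
Set Implicit Arguments. Unset Strict Implicit. Unset Printing Implicit Defensive.

Lemma sum_indicator (T : finType) (c : T) : \sum_(x : T) (c == x) = 1.
Proof. by rewrite (bigD1 c) //= eqxx big1 // => x; rewrite eq_sym => /negbTE ->. Qed.

Section WalkDegrees.
Variables (T : finType) (e : rel T).

Lemma deg_plus_cons u0 x s v :
  deg_plus e u0 (x :: s) v = ((u0 == v) || (x == v)) + deg_plus e x s v.
Proof. by rewrite /deg_plus /= addnCA. Qed.

Lemma deg_plus_parity u0 s v : irreflexive e -> path e u0 s ->
  deg_plus e u0 s v + (u0 == v) + (last u0 s == v) = deg e v + 2 * count_mem v (u0 :: s).
Proof.
move=> e_irr; elim: s u0 => [|x s IHs] u0 /=; first by rewrite /deg_plus /=; lia.
case/andP=> e_u0x walk_x; have := IHs x walk_x; rewrite deg_plus_cons /=.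
have : ~~ ((u0 == v) && (x == v)).
  by apply/andP=> -[/eqP u0v /eqP xv]; move: e_u0x; rewrite u0v xv e_irr.
lia.
Qed.

Lemma sum_parity_change_deg_plus u0 s : irreflexive e -> path e u0 s ->
  \sum_v (odd (deg_plus e u0 s v) != odd (deg e v)) <= 2.
Proof.
move=> e_irr walk.
apply: (@leq_trans (\sum_v ((u0 == v) + (last u0 s == v)))).
  by apply: leq_sum => v _; have := deg_plus_parity v e_irr walk; lia.
by rewrite big_split /= !sum_indicator.
Qed.

End WalkDegrees.

Section Cycle.
Variable n : nat.
Hypothesis n_gt2 : 2 < n.
Implicit Types (j c v x y z : 'I_n) (s : seq 'I_n) (m : 'I_n -> nat).

Lemma cycle_relE x y : cycle_rel n x y = (y == ordS x) || (x == ordS y).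
Proof. by []. Qed.

Lemma ordS_val j : ordS j = (if j.+1 < n then j.+1 else 0) :> nat.
Proof.
case: ltnP => [lt_jn | ge_jn]; first by rewrite /= modn_small.
have e : j.+1 = n by have := ltn_ord j; lia.
by rewrite /= e modnn.
Qed.

Lemma ordSS_val j : ordS (ordS j) = j.+2 %% n :> nat.
Proof. by rewrite /= -addn1 modnDml addn1. Qed.

Lemma ordS_neq j : ordS j != j.
Proof.
rewrite -(inj_eq (@ord_inj n)) ordS_val; have := ltn_ord j.
by case: ifP => /= j1_lt; lia.
Qed.

Lemma cycle_rel_irr : irreflexive (cycle_rel n).
Proof. by move=> x; rewrite cycle_relE orbb eq_sym (negbTE (ordS_neq x)). Qed.

Lemma ordSS_neq j : ordS (ordS j) != j.
Proof.
rewrite -(inj_eq (@ord_inj n)) ordSS_val; have := ltn_ord j.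
case: (ltnP j.+2 n) => [lt_j2n | ge_j2n] lt_jn; first by rewrite modn_small /=; lia.
by rewrite -(subnK ge_j2n) modnDr modn_small /=; lia.
Qed.

Lemma deg_cycle v : deg (cycle_rel n) v = 2.
Proof.
rewrite /deg (@eq_card _ _ (pred2 (ordS v) (ord_pred v))) => [|u].
  rewrite card2; suff -> : ordS v != ord_pred v by [].
  by apply: contraNneq (ordSS_neq v) => ->; rewrite ord_predK.
by rewrite !inE cycle_relE (eq_sym v) (can2_eq (@ordSK n) (@ord_predK n)).
Qed.

(* Edge [j] of the cycle joins [j] and [ordS j]. *)
Definition edge_of (p : 'I_n * 'I_n) : 'I_n := if p.2 == ordS p.1 then p.1 else p.2.

Definition edge_mult (u0 : 'I_n) s j : nat := count (fun p => edge_of p == j) (walk_steps u0 s).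

Lemma edge_mult_cons (u0 : 'I_n) x s j :
  edge_mult u0 (x :: s) j = (edge_of (u0, x) == j) + edge_mult x s j.
Proof. by []. Qed.

Lemma size_edge_mult (u0 : 'I_n) s : size s = \sum_(j < n) edge_mult u0 s j.
Proof.
elim: s u0 => [|x s IHs] u0; first by rewrite big1.
by rewrite (eq_bigr _ (fun j _ => edge_mult_cons u0 x s j)) big_split /= sum_indicator -IHs.
Qed.

Lemma edge_of_ends x y : cycle_rel n x y ->
  let c := edge_of (x, y) in ((x == c) || (x == ordS c)) && ((y == c) || (y == ordS c)).
Proof.
by rewrite cycle_relE /edge_of /=; case: ifP => [/eqP-> _ | _ /= /eqP->]; rewrite !eqxx orbT.
Qed.

Lemma incident_edge_of x y j : cycle_rel n x y ->
  ((x == ordS j) || (y == ordS j)) = (edge_of (x, y) == j) + (edge_of (x, y) == ordS j) :> nat.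
Proof.
rewrite cycle_relE /edge_of /=.
case: ifP => [/eqP-> _ | _ /= /eqP->]; rewrite (inj_eq (@ordS_inj n)).
  by case: (x =P j) => [->|_]; rewrite ?orbT ?orbF // eq_sym (negbTE (ordS_neq j)).
by case: (y =P j) => [->|_] //; rewrite eq_sym (negbTE (ordS_neq j)).
Qed.

Lemma deg_plus_cycle (u0 : 'I_n) s j : path (cycle_rel n) u0 s ->
  deg_plus (cycle_rel n) u0 s (ordS j) = 2 + edge_mult u0 s j + edge_mult u0 s (ordS j).
Proof.
elim: s u0 => [|x s IHs] u0 /=; first by rewrite /deg_plus deg_cycle.
case/andP=> e_u0x walk_x; rewrite deg_plus_cons IHs // !edge_mult_cons (incident_edge_of j e_u0x).
lia.
Qed.

Lemma irregularising_cycleP (u0 : 'I_n) s : irregularising (cycle_rel n) u0 s <->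
  path (cycle_rel n) u0 s /\ forall j, edge_mult u0 s j != edge_mult u0 s (ordS (ordS j)).
Proof.
split=> -[walk irr]; split=> //; [move=> j | move=> u v].
  apply/eqP=> eq_m; apply: (irr (ordS j) (ordS (ordS j))); first by rewrite cycle_relE eqxx.
  by rewrite !deg_plus_cycle // eq_m; lia.
wlog -> : u v / v = ordS u => [hwlog | _].
  rewrite cycle_relE => /orP[]/eqP uv; [|apply/nesym];
    by apply: hwlog; rewrite ?cycle_relE ?uv ?eqxx.
rewrite -[u]ord_predK !deg_plus_cycle //; have := irr (ord_pred u); lia.
Qed.

Lemma sum_ordS (F : 'I_n -> nat) : \sum_(j < n) F (ordS j) = \sum_(j < n) F j.
Proof. by rewrite [RHS](reindex_inj (@ordS_inj n)). Qed.

Lemma sum_ordSS (F : 'I_n -> nat) : \sum_(j < n) F (ordS (ordS j)) = \sum_(j < n) F j.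
Proof. by rewrite (sum_ordS (fun j => F (ordS j))) sum_ordS. Qed.

(* The number of maximal arcs of consecutive edges on which [m] does not vanish,
   unless [m] vanishes nowhere. *)
Definition run_start m j : bool := (m j == 0) && (m (ordS j) != 0).

Definition run_starts m : nat := \sum_(j < n) run_start m j.

Lemma run_starts_add1 m c : (0 < m c) || (0 < m (ordS c)) || (0 < m (ord_pred c)) ->
  run_starts (fun j => (c == j) + m j) <= run_starts m.
Proof.
move=> near_c; have pred_c_neq : ord_pred c != c.
  by apply: contraNneq (ordS_neq c) => {1}<-; rewrite ord_predK.
(* Only the terms at [c] and [ord_pred c] can change. *)
rewrite /run_starts /run_start (bigD1 c) // [X in _ <= X](bigD1 c) //.
rewrite (bigD1 (ord_pred c)) // [X in _ <= _ + X](bigD1 (ord_pred c)) //= ord_predK eqxx.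
rewrite (eq_bigr (fun j => ((m j == 0) && (m (ordS j) != 0) : nat))) => [|j /andP[j_c j_pc]].
  rewrite [c == ordS c]eq_sym (negbTE (ordS_neq c)).
  by rewrite [c == ord_pred c]eq_sym (negbTE pred_c_neq); lia.
rewrite [c == j]eq_sym (negbTE j_c) [c == ordS j]eq_sym.
by rewrite (can2_eq (@ordSK n) (@ord_predK n)) (negbTE j_pc).
Qed.

Lemma edge_of_consecutive x y z : cycle_rel n x y -> cycle_rel n y z ->
  [|| edge_of (y, z) == edge_of (x, y), edge_of (y, z) == ordS (edge_of (x, y))
    | edge_of (y, z) == ord_pred (edge_of (x, y))].
Proof.
move=> /edge_of_ends/andP[_ y_e] /edge_of_ends/andP[y_c _].
move: y_e y_c; set e := edge_of (x, y); set c := edge_of (y, z).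
case/orP=> /eqP y_e; case/orP=> /eqP y_c.
- by rewrite -y_c y_e eqxx.
- by rewrite -[c]ordSK -y_c y_e eqxx !orbT.
- by rewrite -y_c y_e eqxx orbT.
- by rewrite (ordS_inj (etrans (esym y_c) y_e)) eqxx.
Qed.

(* The edges used by a walk form an arc of the cycle. *)
Lemma edge_mult_run_starts (u0 : 'I_n) s : path (cycle_rel n) u0 s -> s != [::] ->
  run_starts (edge_mult u0 s) <= 1.
Proof.
elim: s u0 => [//|x s IHs] u0 /= /andP[e_u0x walk_x] _.
case: s IHs walk_x => [|y s] IHs walk_x.
  apply: (@leq_trans (\sum_(j < n) (edge_of (u0, x) == ordS j))).
    apply: leq_sum => j _; rewrite /run_start /edge_mult /= !addn0 andbC.
    by case: (_ == ordS j); rewrite ?leq_b1.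
  by rewrite (sum_ordS (fun j => edge_of (u0, x) == j : nat)) sum_indicator.
apply: leq_trans (IHs x walk_x isT); apply: run_starts_add1.
have c_pos : 0 < edge_mult x (y :: s) (edge_of (x, y)) by rewrite edge_mult_cons eqxx.
case/andP: walk_x => e_xy _.
by case/or3P: (edge_of_consecutive e_u0x e_xy) => /eqP <-; rewrite c_pos ?orbT.
Qed.

Section Multiplicities.
Variable m : 'I_n -> nat.
Hypothesis m_neq : forall j, m j != m (ordS (ordS j)).

Lemma sum_eq0_le2 : run_starts m <= 1 -> \sum_(j < n) (m j == 0) <= 2.
Proof.
move=> runs; apply: (@leq_trans (\sum_(j < n) (run_start m j + run_start m (ordS j)))).
  by apply: leq_sum => j _; have := m_neq j; rewrite /run_start; lia.
by rewrite big_split /= (sum_ordS (run_start m)) -/(run_starts m) (leq_add runs runs).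
Qed.

(* Summing [m j + m (j + 2) >= 4], which fails only near zeros of [m] or when the
   two terms have different parities. *)
Lemma sum_mult_lower :
  4 * n <= 2 * \sum_(j < n) m j + 4 * \sum_(j < n) (m j == 0)
           + \sum_(j < n) (odd (m j) != odd (m (ordS (ordS j)))).
Proof.
rewrite mulnC -{1}[n]card_ord -sum_nat_const.
apply: (@leq_trans (\sum_(j < n) (m j + m (ordS (ordS j)) + 2 * (m j == 0)
   + 2 * (m (ordS (ordS j)) == 0) + (odd (m j) != odd (m (ordS (ordS j))))))).
  by apply: leq_sum => j _; have := m_neq j; lia.
rewrite !big_split /= (sum_ordSS m) (sum_ordSS (fun j => m j == 0 : nat)) big1_eq.
set S := \sum_(j < n) m j; set Z := \sum_(j < n) (m j == 0 : nat).
by set P := \sum_(j < n) (_ : nat); lia.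
Qed.

End Multiplicities.

Lemma sum_parity_change_le4 (u0 : 'I_n) s : path (cycle_rel n) u0 s ->
  \sum_(j < n) (odd (edge_mult u0 s j) != odd (edge_mult u0 s (ordS (ordS j)))) <= 4.
Proof.
move=> walk; pose D (v : 'I_n) := deg_plus (cycle_rel n) u0 s v.
have D_odd : \sum_(v < n) odd (D v) <= 2.
  apply: leq_trans (sum_parity_change_deg_plus cycle_rel_irr walk).
  by apply: leq_sum => v _; rewrite deg_cycle /D; case: odd.
apply: (@leq_trans (\sum_(j < n) (odd (D (ordS j)) + odd (D (ordS (ordS j)))))).
  by apply: leq_sum => j _; rewrite /D !deg_plus_cycle //; lia.
rewrite big_split /= (sum_ordS (fun j => odd (D j) : nat)).
by rewrite (sum_ordSS (fun j => odd (D j) : nat)); lia.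
Qed.

Lemma irregularising_size_lower (u0 : 'I_n) s :
  irregularising (cycle_rel n) u0 s -> 2 * n - 6 <= size s.
Proof.
case/irregularising_cycleP=> walk m_neq.
have s_nonnil : s != [::] by apply: contraNneq (m_neq u0) => ->.
have zeros := sum_eq0_le2 m_neq (edge_mult_run_starts walk s_nonnil).
have := sum_mult_lower m_neq; have := sum_parity_change_le4 walk.
rewrite (size_edge_mult u0 s); set S := \sum_(j < n) _; set Z := \sum_(j < n) _ in zeros *.
lia.
Qed.

End Cycle.

Lemma irregularising_C3_size_lower (u0 : 'I_3) s :
  irregularising (cycle_rel 3) u0 s -> 3 <= size s.
Proof.
case/irregularising_cycleP=> // _; set m := edge_mult u0 s => m_neq.
have ordS3 (j : 'I_3) : ordS (ordS (ordS j)) = j by apply: val_inj; case: j => -[|[|[]]].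
have : \sum_(j < 3) 3 <= \sum_(j < 3) (m j + m (ordS j) + m (ordS (ordS j))).
  apply: leq_sum => j _; have := m_neq j; have := m_neq (ordS j).
  by have := m_neq (ordS (ordS j)); rewrite !ordS3; lia.
rewrite !big_split /= sum_ordS sum_ordSS sum_nat_const card_ord (size_edge_mult u0 s).
by set S := \sum_(j < 3) _; lia.
Qed.

Definition nat_adj : rel nat := fun x y => (y == x.+1) || (x == y.+1).

(* Edge [j] of the path on [nat] joins [j] and [j.+1]. *)
Definition nat_edge_mult (x0 : nat) (s : seq nat) (j : nat) : nat :=
  count (fun p : nat * nat => minn p.1 p.2 == j) (zip (x0 :: s) s).

Lemma nat_edge_mult_cons x0 x s j :
  nat_edge_mult x0 (x :: s) j = (minn x0 x == j) + nat_edge_mult x s j.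
Proof. by []. Qed.

Lemma nat_edge_mult_cat x0 s1 s2 j :
  nat_edge_mult x0 (s1 ++ s2) j = nat_edge_mult x0 s1 j + nat_edge_mult (last x0 s1) s2 j.
Proof. by elim: s1 x0 => [|x s1 IHs] x0 //=; rewrite !nat_edge_mult_cons IHs addnA. Qed.

Lemma nat_edge_mult_ge x0 s b j : path nat_adj x0 s -> all (leq^~ b) (x0 :: s) -> b <= j ->
  nat_edge_mult x0 s j = 0.
Proof.
elim: s x0 => [//|x s IHs] x0 /= /andP[adj walk] /and3P[x0_le x_le s_le] b_le.
by rewrite nat_edge_mult_cons IHs //= ?x_le //; move: adj; rewrite /nat_adj; lia.
Qed.

Section CycleOfNat.
Variable n : nat.
Hypothesis n_gt2 : 2 < n.
Let n_gt0 : 0 < n. Proof. exact: ltnW (ltnW n_gt2). Qed.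

Definition ord_mod (x : nat) : 'I_n := Ordinal (ltn_pmod x n_gt0).

Lemma ordS_ord_mod x : ordS (ord_mod x) = ord_mod x.+1.
Proof. by apply: val_inj; rewrite /= -addn1 modnDml addn1. Qed.

Lemma ord_mod_adj x y : nat_adj x y ->
  cycle_rel n (ord_mod x) (ord_mod y) /\ edge_of (ord_mod x, ord_mod y) = ord_mod (minn x y).
Proof.
rewrite cycle_relE !ordS_ord_mod /edge_of /= ordS_ord_mod.
case/orP=> /eqP->; rewrite eqxx ?orbT; split=> //.
  by rewrite (minn_idPl (leqnSn x)).
rewrite (minn_idPr (leqnSn y)) ifN // -val_eqE /= -[y.+2]addn2 -{1}[y]addn0.
by rewrite eqn_modDl mod0n modn_small.
Qed.

Lemma path_ord_mod x0 s : path nat_adj x0 s -> path (cycle_rel n) (ord_mod x0) (map ord_mod s).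
Proof.
by elim: s x0 => [//|x s IHs] x0 /= /andP[adj walk]; rewrite (ord_mod_adj adj).1 IHs.
Qed.

Lemma edge_mult_ord_mod x0 s (j : 'I_n) : path nat_adj x0 s -> all (leq^~ n) (x0 :: s) ->
  edge_mult (ord_mod x0) (map ord_mod s) j = nat_edge_mult x0 s j.
Proof.
elim: s x0 => [//|x s IHs] x0 /= /andP[adj walk] /and3P[x0_le x_le s_le].
rewrite edge_mult_cons nat_edge_mult_cons (ord_mod_adj adj).2 IHs /= ?x_le //.
by rewrite -val_eqE /= modn_small //; move: adj; rewrite /nat_adj; lia.
Qed.

Lemma irregularising_of_nat_walk x0 s : path nat_adj x0 s -> all (leq^~ n) (x0 :: s) ->
  (forall j, j < n -> nat_edge_mult x0 s j != nat_edge_mult x0 s (j.+2 %% n)) ->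
  irregularising (cycle_rel n) (ord_mod x0) (map ord_mod s).
Proof.
move=> walk s_le m_neq; apply/irregularising_cycleP => //; split; first exact: path_ord_mod.
by move=> j; rewrite !edge_mult_ord_mod // ordSS_val; apply: m_neq.
Qed.

End CycleOfNat.

Lemma cyclic_neq_of_pattern (M : nat -> nat) n : 3 < n -> M 0 = 0 -> M 1 = 0 ->
  (forall j, 2 <= j < n -> 0 < M j) -> (forall j, 2 <= j -> j.+2 < n -> M j != M j.+2) ->
  forall j, j < n -> M j != M (j.+2 %% n).
Proof.
move=> n_gt3 M0 M1 M_pos M_neq j j_lt_n.
case: (ltnP j.+2 n) => [j2_lt_n | j2_ge_n].
  rewrite modn_small //; case: (ltnP j 2) => [j_lt2 | j_ge2]; last exact: M_neq.
  have : 0 < M j.+2 by apply: M_pos; lia.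
  by case: j {j_lt_n j2_lt_n} j_lt2 => [|[|]] //; rewrite ?M0 ?M1 eq_sym -lt0n.
have : 0 < M j by apply: M_pos; lia.
rewrite -(subnK j2_ge_n) modnDr modn_small; last lia.
have : j.+2 - n < 2 by lia.
by case: (j.+2 - n) => [|[|]] //; rewrite ?M0 ?M1 -lt0n.
Qed.

(* A block from [p] to [p + 4] crosses the edges [p], ..., [p + 3] with
   multiplicities 3, 3, 1, 1. *)
Fixpoint blocks (p t : nat) : seq nat :=
  if t is t'.+1 then
    [:: p + 1; p + 2; p + 1; p; p + 1; p + 2; p + 3; p + 4] ++ blocks (p + 4) t'
  else [::].

Definition block_mult (k : nat) : nat := if k %% 4 < 2 then 3 else 1.

Lemma block_mult_add4 k : block_mult (k + 4) = block_mult k.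
Proof. by rewrite /block_mult modnDr. Qed.

Lemma block_mult_gt0 k : 0 < block_mult k.
Proof. by rewrite /block_mult; case: ifP. Qed.

Lemma block_mult_neq2 k : block_mult k != 2.
Proof. by rewrite /block_mult; case: ifP. Qed.

Lemma block_mult_add2 k : block_mult (k + 2) != block_mult k.
Proof. by rewrite /block_mult; do 2!case: ifP; lia. Qed.

Lemma size_blocks p t : size (blocks p t) = 8 * t.
Proof. by elim: t p => [|t IHt] p //=; rewrite IHt mulnS. Qed.

Lemma last_blocks p t : last p (blocks p t) = p + 4 * t.
Proof. by elim: t p => [|t IHt] p /=; rewrite ?IHt; lia. Qed.

Lemma path_blocks p t : path nat_adj p (blocks p t).
Proof. by elim: t p => [|t IHt] p //=; rewrite /nat_adj IHt; lia. Qed.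

Lemma blocks_le p t : all (leq^~ (p + 4 * t)) (blocks p t).
Proof.
elim: t p => [|t IHt] p //=; rewrite (sub_all _ (IHt _)) => [|x]; last lia.
by rewrite !andbT; lia.
Qed.

Lemma nat_edge_mult_blocks p t j :
  nat_edge_mult p (blocks p t) j = if p <= j < p + 4 * t then block_mult (j - p) else 0.
Proof.
elim: t p => [|t IHt] p; first by rewrite muln0 addn0; case: leqP.
rewrite (nat_edge_mult_cat p [:: p + 1; p + 2; p + 1; p; p + 1; p + 2; p + 3; p + 4]).
rewrite IHt {1}/nat_edge_mult /=.
case: (ltnP j (p + 4)) => [lt_j_p4 | ge_j_p4] /=.
  rewrite addn0; case: (ltnP j p) => [lt_j_p | ge_j_p] /=; first lia.
  rewrite ifT; last lia.
  have [d d_lt4 ->] : exists2 d, d < 4 & j = p + d by exists (j - p); lia.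
  by rewrite addKn /block_mult; case: ifP; lia.
rewrite (_ : j - p = (j - (p + 4)) + 4) ?block_mult_add4; last lia.
by rewrite (_ : (p <= j < p + 4 * t.+1) = (j < p + 4 + 4 * t)); lia.
Qed.

Definition detour (b : bool) (q : nat) : seq nat := if b then [:: q.+1; q] else [::].

Lemma size_detour (b : bool) q : size (detour b q) = 2 * b.
Proof. by case: b. Qed.

Lemma path_detour (b : bool) q : path nat_adj q (detour b q).
Proof. by case: b => //=; rewrite /nat_adj; lia. Qed.

Lemma detour_le (b : bool) q : all (leq^~ (q + b)) (detour b q).
Proof. by case: b => /=; rewrite ?addn1 ?leqnn ?leqnSn. Qed.

Definition prefix_blocks_mult (MP : nat -> nat) p t (b : bool) j : nat :=
  if j < p then MP j
  else if j < p + 4 * t then block_mult (j - p) else 2 * ((j == p + 4 * t) && b).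

Lemma nat_edge_mult_prefix_blocks x0 P p t (b : bool) j :
  path nat_adj x0 P -> last x0 P = p -> all (leq^~ p) (x0 :: P) ->
  nat_edge_mult x0 (P ++ blocks p t ++ detour b (p + 4 * t)) j =
  prefix_blocks_mult (nat_edge_mult x0 P) p t b j.
Proof.
move=> walk last_P P_le; rewrite /prefix_blocks_mult !nat_edge_mult_cat last_P last_blocks.
rewrite nat_edge_mult_blocks.
have -> : nat_edge_mult (p + 4 * t) (detour b (p + 4 * t)) j = 2 * ((j == p + 4 * t) && b).
  by case: b; rewrite /nat_edge_mult /= ?andbF ?andbT ?muln0 //; lia.
case: (ltnP j p) => [j_lt_p | j_ge_p] /=; first lia.
rewrite (nat_edge_mult_ge walk P_le j_ge_p).
by case: (ltnP j (p + 4 * t)) => j_q; lia.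
Qed.

Section PrefixBlocks.
Variables (MP : nat -> nat) (p t : nat) (b : bool).
Hypothesis MP_rng : forall j, 2 <= j < p -> 0 < MP j < 3.
Hypothesis MP_neq : forall j, 2 <= j -> j.+2 < p -> MP j != MP j.+2.
Hypothesis MP_p2 : MP (p - 2) = 1.
Let M := prefix_blocks_mult MP p t b.

Lemma prefix_blocks_mult_gt0 j : 2 <= j < p + 4 * t + b -> 0 < M j.
Proof.
move=> j_rng; rewrite /M /prefix_blocks_mult.
case: (ltnP j p) => [j_lt_p | j_ge_p]; first by have := @MP_rng j; lia.
case: (ltnP j (p + 4 * t)) => [_ | j_ge_q]; first exact: block_mult_gt0.
by case: b j_rng => /=; lia.
Qed.

Lemma prefix_blocks_mult_neq j : 2 <= j -> j.+2 < p + 4 * t + b -> M j != M j.+2.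
Proof.
move=> j_ge2 j2_lt_n; rewrite /M /prefix_blocks_mult.
case: (ltnP j.+2 p) => [j2_lt_p | j2_ge_p]; first by rewrite ifT; [exact: MP_neq | lia].
case: (ltnP j p) => [j_lt_p | j_ge_p].
  have := @MP_rng j; case: (ltnP j.+2 (p + 4 * t)) => [j2_lt_q | j2_ge_q].
    by rewrite /block_mult modn_small ?ifT; lia.
  have -> : j = p - 2 by lia.
  by rewrite MP_p2; case: b j2_lt_n => /=; lia.
case: (ltnP j (p + 4 * t)) => [j_lt_q | j_ge_q]; last by case: b j2_lt_n => /=; lia.
case: (ltnP j.+2 (p + 4 * t)) => [j2_lt_q | j2_ge_q].
  by rewrite eq_sym (_ : j.+2 - p = j - p + 2) ?block_mult_add2; lia.
case: b j2_lt_n => /= j2_lt_n; last lia.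
by rewrite (_ : j.+2 = p + 4 * t) ?eqxx ?block_mult_neq2; lia.
Qed.

End PrefixBlocks.

(* The values 1 and 2 on edges [2 <= j < p] differ from the 3s that start the blocks,
   and [M (p - 2) == 1] from the 2 of a detour right after the prefix. *)
Definition good_prefix (x0 : nat) (P : seq nat) (p : nat) : bool :=
  let M := nat_edge_mult x0 P in
  [&& path nat_adj x0 P, last x0 P == p, all (leq^~ p) (x0 :: P), size P == 2 * p - 6
    & [&& M 0 == 0, M 1 == 0, M (p - 2) == 1,
          all (fun j => 0 < M j < 3) (iota 2 (p - 2))
        & all (fun j => M j != M j.+2) (iota 2 (p - 4))]].

Lemma optimal_walk_of_prefix x0 P p t (b : bool) n :
  good_prefix x0 P p -> n = p + 4 * t + b ->
  exists u0 s, irregularising (cycle_rel n) u0 s /\ walk_length u0 s = 2 * n - 6.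
Proof.
case/and5P=> walk /eqP last_P P_le /eqP size_P /and5P[/eqP M0 /eqP M1 /eqP Mp2 M_rng M_neq].
move=> def_n; set MP := nat_edge_mult x0 P in M0 M1 Mp2 M_rng M_neq.
have p_gt3 : 3 < p.
  have : p - 2 < 2 -> False by case: (p - 2) Mp2 => [|[|]] //; rewrite ?M0 ?M1.
  lia.
have {}M_rng j : 2 <= j < p -> 0 < MP j < 3.
  by move=> j_rng; apply: (allP M_rng); rewrite mem_iota; lia.
have {}M_neq j : 2 <= j -> j.+2 < p -> MP j != MP j.+2.
  by move=> j_ge2 j2_lt; apply: (allP M_neq); rewrite mem_iota; lia.
set W := P ++ blocks p t ++ detour b (p + 4 * t).
have n_gt2 : 2 < n by lia.
exists (ord_mod n_gt2 x0), (map (ord_mod n_gt2) W); split; last first.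
  by rewrite /walk_length size_map !size_cat size_blocks size_P size_detour def_n; lia.
apply: irregularising_of_nat_walk.
- by rewrite /W cat_path walk last_P cat_path path_blocks last_blocks path_detour.
- rewrite /W -cat_cons !all_cat; apply/and3P; split.
  + by apply: (sub_all _ P_le) => x; lia.
  + by apply: (sub_all _ (blocks_le p t)) => x; lia.
  + by apply: (sub_all _ (detour_le b _)) => x; lia.
have W_mult j : nat_edge_mult x0 W j = prefix_blocks_mult MP p t b j.
  exact: nat_edge_mult_prefix_blocks.
apply: cyclic_neq_of_pattern => [|||j|j]; rewrite ?W_mult ?def_n.
- lia.
- by rewrite /prefix_blocks_mult ifT //; lia.
- by rewrite /prefix_blocks_mult ifT //; lia.
- exact: prefix_blocks_mult_gt0.
- exact: prefix_blocks_mult_neq.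
Qed.

Lemma irregularising_walk_C3 :
  exists u0 s, irregularising (cycle_rel 3) u0 s /\ walk_length u0 s = 3.
Proof.
exists (ord_mod (isT : 2 < 3) 1), (map (ord_mod (isT : 2 < 3)) [:: 2; 3; 2]); split=> //.
by apply: irregularising_of_nat_walk => // -[|[|[|]]].
Qed.

Theorem corollary5p6 (n : nat) : 3 <= n ->
  MLW_is (cycle_rel n) (if n == 3 then 3 else (2 * n - 6)%N).
Proof.
move=> n_ge3; case: eqP => [-> | n_neq3].
  by split=> [|u0 s]; [exact: irregularising_walk_C3 | exact: irregularising_C3_size_lower].
split=> [|u0 s]; last by apply: irregularising_size_lower; lia.
have [t [r r_lt4 def_n]] : exists t, exists2 r, r < 4 & n = 4 + 4 * t + r.
  by exists ((n - 4) %/ 4), ((n - 4) %% 4); [rewrite ltn_pmod | lia].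
case: r r_lt4 def_n => [|[|[|[|]]]] // _ def_n.
- by apply: (@optimal_walk_of_prefix 2 [:: 3; 4] 4 t false) => //; lia.
- by apply: (@optimal_walk_of_prefix 3 [:: 2; 3; 4; 5] 5 t false) => //; lia.
- by apply: (@optimal_walk_of_prefix 4 [:: 3; 2; 3; 4; 5; 6] 6 t false) => //; lia.
- by apply: (@optimal_walk_of_prefix 4 [:: 3; 2; 3; 4; 5; 6] 6 t true) => //; lia.
Qed.
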